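(* The Markov spectrum $\mathcal{M}$ of $\mathbb{Q}((1/T))$ equals $$\{M(A): A=(g_i)_{i\in\mathbb{Z}} \text{ a doubly infinite sequence of polynomials } g_i\in\mathbb{Q}[T] \text{ with } \deg g_i\ge1\}.$$
   Context: $\mathbb{Q}((1/T))$ is the field of formal Laurent series in $1/T$ over $\mathbb{Q}$; $\deg$ of a nonzero series is the exponent of its leading term, $\deg0=-\infty$. For polynomials $c_0,c_1,\dots$ with $\deg c_j\ge1$ for $j\ge1$, $[c_0,c_1,\dots]=c_0+1/(c_1+1/(c_2+\cdots))$ converges in $\mathbb{Q}((1/T))$. For a doubly infinite sequence $A=(g_i)_{i\in\mathbb{Z}}$ of polynomials of positive degree, $\lambda_i(A)=[g_i,g_{i+1},\dots]+[0,g_{i-1},g_{i-2},\dots]$ and $M(A)=\sup_{i\in\mathbb{Z}}\deg\lambda_i(A)\in\mathbb{Z}\cup\{\infty\}$. A binary quadratic form is $Q=AX^2+BXY+CY^2$ with $A,B,C\in\mathbb{Q}((1/T))$ not all in $\mathbb{Q}(T)$, discriminant $D=B^2-4AC$; it is indefinite if $D\ne0$ is a square in $\mathbb{Q}((1/T))$. $m(Q)=\inf\{\deg Q(X,Y):X,Y\in\mathbb{Q}[T],(X,Y)\ne(0,0)\}$, and $\mathcal{M}=\{\tfrac{\deg D}{2}-m(Q):Q\text{ indefinite}\}$, with value $+\infty$ when $m(Q)=-\infty$. *)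

(* Q((1/T)) is modelled at the level of coefficient
   functions  c : int -> rat  (c k = coefficient of T^k); a Laurent series in
   1/T is such a function with support bounded above ([laurent]). *)
From mathcomp Require Import all_boot all_order all_algebra.
From mathcomp Require Import constructive_ereal.
From Stdlib Require Import ClassicalEpsilon.

Set Implicit Arguments.
Unset Strict Implicit.
Unset Printing Implicit Defensive.

Import Order.TTheory GRing.Theory Num.Theory.
Local Open Scope ring_scope.

Definition series := int -> rat.

Definition laurent (c : series) : Prop :=
  exists N : int, forall k : int, N < k -> c k = 0.

Definition is_top (c : series) (d : int) : Prop :=
  c d != 0 /\ forall k : int, d < k -> c k = 0.

(* exponent of the leading term (0 if there is none; only used when c <> 0) *)
Definition ltop (c : series) : int :=
  match excluded_middle_informative (exists d, is_top c d) with
  | left H => proj1_sig (constructive_indefinite_description _ H)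
  | right _ => 0
  end.

Definition deg (c : series) : \bar int :=
  match excluded_middle_informative (exists d, is_top c d) with
  | left H => (proj1_sig (constructive_indefinite_description _ H))%:E
  | right _ => -oo%E
  end.

Definition szero : series := fun _ => 0.
Definition sadd (a b : series) : series := fun k => a k + b k.
Definition sopp (a : series) : series := fun k => - a k.
Definition sscale (r : rat) (a : series) : series := fun k => r * a k.

Definition sbound (c : series) : int :=
  match excluded_middle_informative (laurent c) with
  | left H => proj1_sig (constructive_indefinite_description _ H)
  | right _ => 0
  end.

(* product: (ab)_k = sum_{i+j=k} a_i b_j, finite for Laurent series *)
Definition smul (a b : series) : series := fun k =>
  let ta := sbound a in let tb := sbound b in
  let n := ta + tb - k in
  if n < 0 then 0
  else \sum_(j < `|n|%N.+1) a (ta - j%:Z) * b (k - ta + j%:Z).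

Definition poly2s (p : {poly rat}) : series := fun k =>
  if 0 <= k then p`_(`|k|%N) else 0.

(* coefficients of the inverse: a j = coefficient of T^(d-j) of the series;
   returns [:: b_0; ...; b_m] where b_m is the coefficient of T^(-d-m) *)
Fixpoint inv_coefs (a : nat -> rat) (m : nat) : seq rat :=
  match m with
  | 0 => [:: (a 0%N)^-1]
  | m'.+1 => let s := inv_coefs a m' in
      rcons s (- (a 0%N)^-1 *
               \sum_(1 <= j < m'.+2) a j * nth 0 s (m'.+1 - j)%N)
  end.

(* multiplicative inverse in Q((1/T)) (for c = 0 this gives 0, as 0^-1 = 0 in rat) *)
Definition sinv (c : series) : series := fun k =>
  let d := ltop c in
  if k <= - d then
    let n := `|- d - k|%N in nth 0 (inv_coefs (fun j => c (d - j%:Z)) n) n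
  else 0.

Fixpoint cf_fin (c : nat -> {poly rat}) (n : nat) : series :=
  match n with
  | 0 => poly2s (c 0%N)
  | n'.+1 => sadd (poly2s (c 0%N)) (sinv (cf_fin (fun j => c j.+1) n'))
  end.

(* x = [c_0, c_1, ...] : limit of the finite continued fractions in the
   1/T-adic topology, i.e. deg (x - [c_0,...,c_n]) -> -oo *)
Definition cf_value (c : nat -> {poly rat}) (x : series) : Prop :=
  laurent x /\
  forall N : int, exists n0 : nat, forall n : nat, (n0 <= n)%N ->
    (deg (sadd x (sopp (cf_fin c n))) < N%:E)%E.

Definition is_lub (S : \bar int -> Prop) (x : \bar int) : Prop :=
  (forall y, S y -> (y <= x)%E) /\
  (forall z, (forall y, S y -> (y <= z)%E) -> (x <= z)%E).
Definition is_glb (S : \bar int -> Prop) (x : \bar int) : Prop :=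
  (forall y, S y -> (x <= y)%E) /\
  (forall z, (forall y, S y -> (z <= y)%E) -> (z <= x)%E).

(* lambda_i(A) = [g_i, g_{i+1}, ...] + [0, g_{i-1}, g_{i-2}, ...] *)
Definition is_lambda (g : int -> {poly rat}) (i : int) (l : series) : Prop :=
  exists x y : series,
    cf_value (fun j => g (i + j%:Z)) x /\
    cf_value (fun j => if j == 0%N then 0 else g (i - j%:Z)) y /\
    l = sadd x y.

Definition is_M (g : int -> {poly rat}) (v : \bar int) : Prop :=
  is_lub (fun e => exists i l, is_lambda g i l /\ e = deg l) v.

Definition in_QT (a : series) : Prop :=
  exists p q : {poly rat}, q != 0 /\ smul (poly2s q) a = poly2s p.

Definition disc (A B C : series) : series :=
  sadd (smul B B) (sopp (sscale 4 (smul A C))).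

Definition qf_eval (A B C : series) (X Y : {poly rat}) : series :=
  sadd (smul A (poly2s (X * X)))
       (sadd (smul B (poly2s (X * Y))) (smul C (poly2s (Y * Y)))).

Definition is_bqf (A B C : series) : Prop :=
  laurent A /\ laurent B /\ laurent C /\
  ~ (in_QT A /\ in_QT B /\ in_QT C).

Definition indefinite (A B C : series) : Prop :=
  disc A B C <> szero /\
  exists S : series, laurent S /\ smul S S = disc A B C.

Definition is_mQ (A B C : series) (m : \bar int) : Prop :=
  is_glb (fun e => exists X Y : {poly rat},
            (X != 0 \/ Y != 0) /\ e = deg (qf_eval A B C X Y)) m.

(* Markov spectrum: values deg(D)/2 - m(Q) (= +oo when m(Q) = -oo) *)
Definition markov_spectrum (v : \bar int) : Prop :=
  exists A B C : series, is_bqf A B C /\ indefinite A B C /\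
  exists (d : int) (m : \bar int),
    deg (disc A B C) = (2 * d)%:E /\ is_mQ A B C m /\ v = (d%:E - m)%E.

(* Both sets are {1, 2, ..., +oo}.  Since lambda_i(A) is g_i plus a series of
   negative degree, M(A) = sup_i deg g_i, which takes every value >= 1.
   For an indefinite form write Q = a (X + u Y) (X + w Y) with w - u = sqrt D / a.
   Dirichlet's box principle gives polynomials X, Y <> 0 with deg Y <= N and
   deg (X + u Y) <= -N-1; for N = |deg a - deg D / 2| this yields
   deg Q(X, Y) <= deg D / 2 - 1, i.e. deg D / 2 - m(Q) >= 1.  Conversely
   alpha = [T^n, T^n, ...] is an irrational root of alpha^2 = T^n alpha + 1, and
   the form alpha (X^2 - T^n X Y - Y^2) has discriminant alpha^2 (T^2n + 4) and
   m(Q) = deg alpha = n, because X^2 - T^n X Y - Y^2 is anisotropic over Q[T]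
   (descent on degrees); the form alpha X Y represents 0 and gives +oo. *)

From HB Require Import structures.
From mathcomp Require Import all_boot all_order all_algebra.
From mathcomp Require Import constructive_ereal boolp.
From mathcomp Require Import zify ring.
From Stdlib Require Import ClassicalEpsilon.

Set Implicit Arguments.
Unset Strict Implicit.
Unset Printing Implicit Defensive.
Import Order.TTheory GRing.Theory Num.Theory.
Local Open Scope ring_scope.

Definition vanishes_above (c : series) (t : int) := forall k : int, t < k -> c k = 0.

Lemma vanishes_above_laurent c t : vanishes_above c t -> laurent c.
Proof. by exists t. Qed.

Lemma vanishes_aboveW c t t' : vanishes_above c t -> t <= t' -> vanishes_above c t'.
Proof. by move=> h le k lt; apply: h; lia. Qed.

Lemma sbound_vanishes_above c : laurent c -> vanishes_above c (sbound c).
Proof.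
rewrite /sbound; case: excluded_middle_informative => // H _.
by case: (constructive_indefinite_description _ H).
Qed.

Lemma ltz_or_subn (t k : int) : t < k \/ exists n : nat, k = t - n%:Z.
Proof. by case: (ltP t k) => h; [left | right; exists `|t - k|%N; lia]. Qed.

(* [smul] with the support bounds [ta], [tb] as parameters. *)
Definition cauchy_coef (a b : series) (ta tb k : int) : rat :=
  if ta + tb - k < 0 then 0
  else \sum_(j < `|(ta + tb - k)%R|%N.+1) a (ta - j%:Z) * b (k - ta + j%:Z).

Lemma cauchy_coef_gt a b ta tb k : ta + tb < k -> cauchy_coef a b ta tb k = 0.
Proof. by move=> h; rewrite /cauchy_coef ifT //; lia. Qed.

Lemma cauchy_coef_boundSl a b ta tb k : vanishes_above a ta ->
  cauchy_coef a b (ta + 1) tb k = cauchy_coef a b ta tb k.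
Proof.
move=> ha; rewrite /cauchy_coef.
have [lt|ge] := ltP (ta + tb - k) (-1); first by rewrite !ifT //; lia.
have [lt0|ge0] := ltP (ta + tb - k) 0.
  have -> : ta + 1 + tb - k = 0 by lia.
  by rewrite ltxx /= big_ord1 ha ?mul0r //=; lia.
rewrite ifF; last by lia.
have -> : `|(ta + 1 + tb - k)%R|%N = `|(ta + tb - k)%R|%N.+1 by lia.
rewrite big_ord_recl /= ha ?mul0r ?add0r; last by lia.
by apply: eq_bigr => j _; congr (a _ * b _); rewrite /bump /=; lia.
Qed.

Lemma cauchy_coef_boundSr a b ta tb k : vanishes_above b tb ->
  cauchy_coef a b ta (tb + 1) k = cauchy_coef a b ta tb k.
Proof.
move=> hb; rewrite /cauchy_coef.
have [lt|ge] := ltP (ta + tb - k) (-1); first by rewrite !ifT //; lia.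
have [lt0|ge0] := ltP (ta + tb - k) 0.
  have -> : ta + (tb + 1) - k = 0 by lia.
  by rewrite ltxx /= big_ord1 hb ?mulr0 //=; lia.
rewrite ifF; last by lia.
have -> : `|(ta + (tb + 1) - k)%R|%N = `|(ta + tb - k)%R|%N.+1 by lia.
rewrite big_ord_recr /= hb ?mulr0 ?addr0 //; lia.
Qed.

Lemma cauchy_coef_boundl a b ta ta' tb k : vanishes_above a ta -> ta <= ta' ->
  cauchy_coef a b ta' tb k = cauchy_coef a b ta tb k.
Proof.
move=> ha le; have -> : ta' = ta + `|(ta' - ta)%R|%N%:Z by lia.
elim: `|_|%N => [|n IH]; first by rewrite addr0.
rewrite -IH -(@cauchy_coef_boundSl _ _ (ta + n%:Z)); first by congr cauchy_coef; lia.
by apply: vanishes_aboveW ha _; lia.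
Qed.

Lemma cauchy_coef_boundr a b ta tb tb' k : vanishes_above b tb -> tb <= tb' ->
  cauchy_coef a b ta tb' k = cauchy_coef a b ta tb k.
Proof.
move=> hb le; have -> : tb' = tb + `|(tb' - tb)%R|%N%:Z by lia.
elim: `|_|%N => [|n IH]; first by rewrite addr0.
rewrite -IH -(@cauchy_coef_boundSr _ _ _ (tb + n%:Z)); first by congr cauchy_coef; lia.
by apply: vanishes_aboveW hb _; lia.
Qed.

Lemma smulE a b ta tb k : vanishes_above a ta -> vanishes_above b tb ->
  smul a b k = cauchy_coef a b ta tb k.
Proof.
move=> ha hb.
have sa := sbound_vanishes_above (vanishes_above_laurent ha).
have sb := sbound_vanishes_above (vanishes_above_laurent hb).
set ma := Num.max (sbound a) ta; set mb := Num.max (sbound b) tb.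
have [le_a le_a'] : sbound a <= ma /\ ta <= ma by rewrite !le_max !lexx orbT.
have [le_b le_b'] : sbound b <= mb /\ tb <= mb by rewrite !le_max !lexx orbT.
rewrite -[smul a b k]/(cauchy_coef a b (sbound a) (sbound b) k).
rewrite -(cauchy_coef_boundl _ _ _ sa le_a) -(cauchy_coef_boundr _ _ _ sb le_b).
by rewrite (cauchy_coef_boundl _ _ _ ha le_a') (cauchy_coef_boundr _ _ _ hb le_b').
Qed.

Lemma vanishes_above_smul a b ta tb : vanishes_above a ta -> vanishes_above b tb ->
  vanishes_above (smul a b) (ta + tb).
Proof. by move=> ha hb k lt; rewrite (smulE _ ha hb) cauchy_coef_gt. Qed.

Definition window (a : series) (t : int) (N : nat) : {poly rat} :=
  \poly_(j < N) a (t - j%:Z).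

Lemma smul_window a b ta tb (n N : nat) :
  vanishes_above a ta -> vanishes_above b tb -> (n < N)%N ->
  smul a b (ta + tb - n%:Z) = (window a ta N * window b tb N)`_n.
Proof.
move=> ha hb lt; rewrite (smulE _ ha hb) /cauchy_coef coefM ifF; last by lia.
have -> : `|(ta + tb - (ta + tb - n%:Z))%R|%N = n by lia.
apply: eq_bigr => j _; have := ltn_ord j; rewrite !coef_poly => ltj.
by rewrite ifT ?ifT; [congr (a _ * b _); lia | lia | lia].
Qed.

Lemma window_smul a b ta tb N : vanishes_above a ta -> vanishes_above b tb ->
  forall j, (j < N)%N ->
  (window (smul a b) (ta + tb) N)`_j = (window a ta N * window b tb N)`_j.
Proof. by move=> ha hb j lt; rewrite coef_poly lt (smul_window ha hb lt). Qed.

Lemma coefMr_agree (R : nzRingType) (p q q' : {poly R}) (N n : nat) :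
  (forall j, (j < N)%N -> q`_j = q'`_j) -> (n < N)%N -> (p * q)`_n = (p * q')`_n.
Proof.
move=> h lt; rewrite !coefM; apply: eq_bigr => j _; rewrite h //.
by have := ltn_ord j; lia.
Qed.

Lemma coefMl_agree (R : comNzRingType) (p p' q : {poly R}) (N n : nat) :
  (forall j, (j < N)%N -> p`_j = p'`_j) -> (n < N)%N -> (p * q)`_n = (p' * q)`_n.
Proof. by move=> h lt; rewrite mulrC (mulrC p'); apply: coefMr_agree h lt. Qed.

Lemma window_add a b t N : window (sadd a b) t N = window a t N + window b t N.
Proof. by apply/polyP => j; rewrite coefD !coef_poly; case: ifP; rewrite ?addr0. Qed.

Lemma poly2s_vanishes_above p : vanishes_above (poly2s p) ((size p)%:Z - 1).
Proof.
move=> k lt; rewrite /poly2s; case: ifP => // _.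
by rewrite nth_default //; move: lt; set s := size p; lia.
Qed.

Lemma poly2sC c k : poly2s c%:P k = if k == 0 then c else 0.
Proof.
rewrite /poly2s coefC; have [->|nz] := eqVneq k 0; first by [].
by case: ifP => // _; rewrite ifF //; lia.
Qed.

Lemma window_poly2sC c N : (0 < N)%N -> window (poly2s c%:P) 0 N = c%:P.
Proof.
move=> hN; apply/polyP => j; rewrite coef_poly coefC poly2sC.
by case: j => [|j]; rewrite ?hN ?subr0 //=; case: ifP => //; rewrite ifF //; lia.
Qed.

Record lseries := LSeries { lcoef : series; lcoefP : laurent lcoef }.

Lemma lseriesP (x y : lseries) : lcoef x =1 lcoef y -> x = y.
Proof.
case: x y => [a ha] [b hb] /= /funext eab; subst b.
by rewrite (Prop_irrelevance ha hb).
Qed.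

HB.instance Definition _ := gen_eqMixin lseries.
HB.instance Definition _ := gen_choiceMixin lseries.

Definition has_deg (x : lseries) d := is_top (lcoef x) d.
Definition deg_le (x : lseries) t := vanishes_above (lcoef x) t.

Lemma lseries_vanishes_above (x : lseries) : exists t, vanishes_above (lcoef x) t.
Proof. by case: x => a [t ht]; exists t. Qed.

Lemma vanishes_above_max a b ta tb : vanishes_above a ta -> vanishes_above b tb ->
  vanishes_above a (Num.max ta tb) /\ vanishes_above b (Num.max ta tb).
Proof.
by move=> ha hb; split; [apply: vanishes_aboveW ha _ | apply: vanishes_aboveW hb _];
  rewrite le_max lexx ?orbT.
Qed.

Lemma vanishes_above_sadd a b t :
  vanishes_above a t -> vanishes_above b t -> vanishes_above (sadd a b) t.
Proof. by move=> ha hb k lt; rewrite /sadd ha ?hb ?addr0. Qed.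

Lemma vanishes_above_sopp a t : vanishes_above a t -> vanishes_above (sopp a) t.
Proof. by move=> ha k lt; rewrite /sopp ha ?oppr0. Qed.

Definition lzero := LSeries (@vanishes_above_laurent szero 0 (fun _ _ => erefl)).

Lemma laurent_sadd (x y : lseries) : laurent (sadd (lcoef x) (lcoef y)).
Proof.
have [tx hx] := lseries_vanishes_above x; have [ty hy] := lseries_vanishes_above y.
have [hx' hy'] := vanishes_above_max hx hy.
exact: vanishes_above_laurent (vanishes_above_sadd hx' hy').
Qed.

Lemma laurent_sopp (x : lseries) : laurent (sopp (lcoef x)).
Proof.
have [t ht] := lseries_vanishes_above x.
exact: vanishes_above_laurent (vanishes_above_sopp ht).
Qed.

Lemma laurent_smul (x y : lseries) : laurent (smul (lcoef x) (lcoef y)).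
Proof.
have [tx hx] := lseries_vanishes_above x; have [ty hy] := lseries_vanishes_above y.
exact: vanishes_above_laurent (vanishes_above_smul hx hy).
Qed.

Definition ladd x y := LSeries (laurent_sadd x y).
Definition lopp x := LSeries (laurent_sopp x).
Definition lmul x y := LSeries (laurent_smul x y).
Definition lpoly (p : {poly rat}) :=
  LSeries (vanishes_above_laurent (@poly2s_vanishes_above p)).
Definition lone := lpoly 1.

Lemma laddA : associative ladd.
Proof. by move=> x y z; apply: lseriesP => k /=; rewrite /sadd addrA. Qed.
Lemma laddC : commutative ladd.
Proof. by move=> x y; apply: lseriesP => k /=; rewrite /sadd addrC. Qed.
Lemma ladd0 : left_id lzero ladd.
Proof. by move=> x; apply: lseriesP => k /=; rewrite /sadd add0r. Qed.
Lemma laddN : left_inverse lzero lopp ladd.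
Proof. by move=> x; apply: lseriesP => k /=; rewrite /sadd /sopp addNr. Qed.

HB.instance Definition _ := GRing.isZmodule.Build lseries laddA laddC ladd0 laddN.

Lemma lmulC : commutative lmul.
Proof.
move=> x y; apply: lseriesP => k /=.
have [tx hx] := lseries_vanishes_above x; have [ty hy] := lseries_vanishes_above y.
have [lt|[n ->]] := ltz_or_subn (tx + ty) k.
  by rewrite (vanishes_above_smul hx hy) ?(vanishes_above_smul hy hx) //; lia.
rewrite (smul_window (N := n.+1) hx hy) // [tx + ty]addrC.
by rewrite (smul_window (N := n.+1) hy hx) // mulrC.
Qed.

Lemma lmulA : associative lmul.
Proof.
move=> x y z; apply: lseriesP => k /=.
have [tx hx] := lseries_vanishes_above x; have [ty hy] := lseries_vanishes_above y.
have [tz hz] := lseries_vanishes_above z.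
have hyz := vanishes_above_smul hy hz; have hxy := vanishes_above_smul hx hy.
have [lt|[n ->]] := ltz_or_subn (tx + ty + tz) k.
  by rewrite (vanishes_above_smul hx hyz) ?(vanishes_above_smul hxy hz) //; lia.
rewrite -[tx + ty + tz]addrA (smul_window (N := n.+1) hx hyz) // addrA.
rewrite (smul_window (N := n.+1) hxy hz) //.
rewrite (coefMr_agree _ (window_smul hy hz)) //.
by rewrite (coefMl_agree _ (window_smul hx hy)) // mulrA.
Qed.

Lemma lmulDl : left_distributive lmul ladd.
Proof.
move=> x y z; apply: lseriesP => k /=.
have [tx0 hx0] := lseries_vanishes_above x; have [ty0 hy0] := lseries_vanishes_above y.
have [tz hz] := lseries_vanishes_above z.
have [hx hy] := vanishes_above_max hx0 hy0; set t := Num.max _ _ in hx hy.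
have hxy := vanishes_above_sadd hx hy.
rewrite /sadd; have [lt|[n ->]] := ltz_or_subn (t + tz) k.
  rewrite (vanishes_above_smul hxy hz) ?(vanishes_above_smul hx hz);
  by rewrite ?(vanishes_above_smul hy hz) ?addr0 //; lia.
by rewrite !(smul_window (N := n.+1) _ hz) // window_add mulrDl coefD.
Qed.

Lemma lmul1 : left_id lone lmul.
Proof.
move=> x; apply: lseriesP => k /=.
have [tx hx] := lseries_vanishes_above x.
have h1 := @poly2s_vanishes_above 1; rewrite size_poly1 subrr in h1.
have [lt|[n ->]] := ltz_or_subn (0 + tx) k.
  by rewrite (vanishes_above_smul h1 hx) ?hx //; lia.
rewrite (smul_window (N := n.+1) h1 hx) // window_poly2sC // mul1r coef_poly ltnSn.
by rewrite add0r.
Qed.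

Lemma poly2s1 k : poly2s 1 k = (k == 0)%:R.
Proof. by rewrite poly2sC; case: eqP. Qed.

Lemma lone_neq0 : lone != 0.
Proof.
by apply/eqP => /(congr1 (fun x => lcoef x 0)); rewrite /= poly2s1 => /eqP; rewrite oner_eq0.
Qed.

HB.instance Definition _ :=
  GRing.Zmodule_isComNzRing.Build lseries lmulA lmulC lmul1 lmulDl lone_neq0.

Lemma lcoefD (x y : lseries) k : lcoef (x + y) k = lcoef x k + lcoef y k. Proof. by []. Qed.
Lemma lcoefB (x y : lseries) k : lcoef (x - y) k = lcoef x k - lcoef y k. Proof. by []. Qed.
Lemma lcoef0 k : lcoef 0 k = 0. Proof. by []. Qed.
Lemma lcoefM (x y : lseries) : lcoef (x * y) = smul (lcoef x) (lcoef y). Proof. by []. Qed.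
Lemma lcoef1 : lcoef 1 = poly2s 1. Proof. by []. Qed.

Lemma lcoef_sum I (r : seq I) (P : pred I) (F : I -> lseries) k :
  lcoef (\sum_(i <- r | P i) F i) k = \sum_(i <- r | P i) lcoef (F i) k.
Proof. exact: (big_morph (lcoef^~ k) (fun x y => lcoefD x y k) (lcoef0 k)). Qed.

Lemma lcoef_natmul (x : lseries) n k : lcoef (x *+ n) k = lcoef x k *+ n.
Proof. by elim: n => [|n IH]; rewrite ?mulr0n ?mulrS ?lcoefD ?IH. Qed.

Lemma lseries_eq0P (x : lseries) : reflect (forall k, lcoef x k = 0) (x == 0).
Proof. by apply: (iffP eqP) => [-> //|h]; apply: lseriesP => k; rewrite h. Qed.

Lemma is_top_uniq c d d' : is_top c d -> is_top c d' -> d = d'.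
Proof.
move=> [h1 h2] [h1' h2']; case: (ltgtP d d') => // lt.
  by move: h1'; rewrite h2 ?eqxx.
by move: h1; rewrite h2' ?eqxx.
Qed.

Lemma deg_is_top c d : is_top c d -> deg c = d%:E.
Proof.
move=> h; rewrite /deg; case: excluded_middle_informative => [H|[]]; last by exists d.
by case: (constructive_indefinite_description _ H) => d' h' /=; rewrite (is_top_uniq h' h).
Qed.

Lemma ltop_is_top c d : is_top c d -> ltop c = d.
Proof.
move=> h; rewrite /ltop; case: excluded_middle_informative => [H|[]]; last by exists d.
by case: (constructive_indefinite_description _ H) => d' h' /=; rewrite (is_top_uniq h' h).
Qed.

Lemma deg_no_top c : ~ (exists d, is_top c d) -> deg c = -oo%E.
Proof. by move=> h; rewrite /deg; case: excluded_middle_informative. Qed.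

Lemma is_top_exists c t k0 : vanishes_above c t -> c k0 != 0 -> exists d, is_top c d.
Proof.
move=> hub ck.
have hk : k0 <= t by case: (leP k0 t) => // lt; rewrite hub ?eqxx in ck.
move: {2}`|(t - k0)%R|%N (leqnn `|(t - k0)%R|%N) => n.
elim: n k0 hk ck => [|n IH] k0 hk ck len.
  by exists k0; split => // k lt; apply: hub; lia.
case: (pselect (exists k, k0 < k /\ c k != 0)) => [[k [lt ck']]|nex].
  have hk' : k <= t by case: (leP k t) => // lt'; rewrite hub ?eqxx in ck'.
  by apply: (IH k) => //; lia.
exists k0; split => // k lt; apply/eqP; apply: contraT => nz.
by case: nex; exists k.
Qed.

Lemma size_inv_coefs a m : size (inv_coefs a m) = m.+1.
Proof. by elim: m => //= m IH; rewrite size_rcons IH. Qed.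

Definition inv_coef (a : nat -> rat) (i : nat) := nth 0 (inv_coefs a i) i.

Lemma nth_inv_coefs a m i : (i <= m)%N -> nth 0 (inv_coefs a m) i = inv_coef a i.
Proof.
elim: m => [|m IH]; first by rewrite leqn0 => /eqP ->.
rewrite leq_eqVlt => /orP [/eqP -> //|lt].
by rewrite /= nth_rcons size_inv_coefs lt IH.
Qed.

Lemma inv_coefS a m :
  inv_coef a m.+1 = - (a 0%N)^-1 * \sum_(j < m.+1) a j.+1 * inv_coef a (m - j).
Proof.
rewrite /inv_coef /= nth_rcons size_inv_coefs ltnn eqxx; congr (_ * _).
rewrite big_add1 /= big_mkord; apply: eq_bigr => j _.
by rewrite nth_inv_coefs; [congr (_ * inv_coef _ _); lia | have := ltn_ord j; lia].
Qed.

Lemma inv_coef_conv a n : a 0%N != 0 ->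
  \sum_(j < n.+1) a j * inv_coef a (n - j) = (n == 0%N)%:R.
Proof.
move=> a0; case: n => [|m]; first by rewrite big_ord1 /inv_coef /= mulfV.
rewrite big_ord_recl subn0 inv_coefS /= mulrA mulrN mulfV // mulN1r.
by under [X in _ + X = _]eq_bigr => j _ do rewrite /bump /= add1n subSS; rewrite addNr.
Qed.

Lemma inv_coef0 m : inv_coef (fun _ => 0) m = 0.
Proof. by case: m => [|m]; rewrite ?inv_coefS /inv_coef /= invr0 ?oppr0 ?mul0r. Qed.

Lemma sinv_vanishes_above c : vanishes_above (sinv c) (- ltop c).
Proof. by move=> k lt; rewrite /sinv ifF //; lia. Qed.

Lemma sinv_coef c d (j : nat) : is_top c d ->
  sinv c (- d - j%:Z) = inv_coef (fun i => c (d - i%:Z)) j.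
Proof.
move=> h; rewrite /sinv (ltop_is_top h) ifT; last by lia.
by rewrite /inv_coef; have -> : `|(- d - (- d - j%:Z))%R|%N = j by lia.
Qed.

Definition linv (x : lseries) :=
  LSeries (vanishes_above_laurent (@sinv_vanishes_above (lcoef x))).

Lemma has_deg_exists (x : lseries) : x != 0 -> exists d, has_deg x d.
Proof.
move=> /lseries_eq0P nz; have [t ht] := lseries_vanishes_above x.
have [k ck] : exists k, lcoef x k != 0.
  by apply: contra_notP nz => h k; apply/eqP; apply: contraT => ck; case: h; exists k.
exact: is_top_exists ht ck.
Qed.

Lemma lmulV (x : lseries) : x != 0 -> linv x * x = 1.
Proof.
move=> nz; rewrite mulrC; have [d hd] := has_deg_exists nz.
apply: lseriesP => k; rewrite lcoefM lcoef1 /=.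
have hx : vanishes_above (lcoef x) d by case: hd.
have hi : vanishes_above (sinv (lcoef x)) (- d).
  by rewrite -(ltop_is_top hd); exact: sinv_vanishes_above.
have [lt|[n ->]] := ltz_or_subn (d + - d) k.
  rewrite (vanishes_above_smul hx hi) // poly2s1.
  by have -> : (k == 0) = false by apply/negbTE/eqP; lia.
rewrite (smul_window (N := n.+1) hx hi) // coefM poly2s1.
have -> : (d + - d - n%:Z == 0) = (n == 0%N) by apply/eqP/eqP; lia.
rewrite -(inv_coef_conv (a := fun i : nat => lcoef x (d - i%:Z))); last first.
  by case: hd; rewrite subr0.
apply: eq_bigr => j _; have := ltn_ord j => ltj; rewrite !coef_poly !ifT; try lia.
by rewrite -sinv_coef //; congr (_ * sinv _ _); lia.
Qed.

Lemma linv0 : linv 0 = 0.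
Proof. by apply: lseriesP => k; rewrite /= /sinv; case: ifP => // _; exact: inv_coef0. Qed.

HB.instance Definition _ := GRing.ComNzRing_isField.Build lseries lmulV linv0.

Lemma lcoefV (x : lseries) : lcoef x^-1 = sinv (lcoef x). Proof. by []. Qed.

Lemma has_deg_le x d : has_deg x d -> deg_le x d.
Proof. by case. Qed.

Lemma has_deg_neq0 x d : has_deg x d -> x != 0.
Proof. by case=> h _; apply: contra h => /eqP ->. Qed.

Lemma deg_has_deg x d : has_deg x d -> deg (lcoef x) = d%:E.
Proof. exact: deg_is_top. Qed.

Lemma deg_lcoef0 : deg (lcoef 0) = -oo%E.
Proof. by apply: deg_no_top => -[d [/eqP]]. Qed.

Lemma deg_leW x t t' : deg_le x t -> t <= t' -> deg_le x t'.
Proof. exact: vanishes_aboveW. Qed.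

Lemma deg_leD x y t : deg_le x t -> deg_le y t -> deg_le (x + y) t.
Proof. exact: vanishes_above_sadd. Qed.

Lemma deg_leN x t : deg_le x t -> deg_le (- x) t.
Proof. exact: vanishes_above_sopp. Qed.

Lemma deg_leM x y s t : deg_le x s -> deg_le y t -> deg_le (x * y) (s + t).
Proof. exact: vanishes_above_smul. Qed.

Lemma deg_le_eq0 x : (forall t, deg_le x t) -> x = 0.
Proof. by move=> h; apply/eqP/lseries_eq0P => k; apply: (h (k - 1)); lia. Qed.

Lemma has_degM x y dx dy : has_deg x dx -> has_deg y dy -> has_deg (x * y) (dx + dy).
Proof.
move=> hx hy; split; last exact: deg_leM (has_deg_le hx) (has_deg_le hy).
rewrite -[dx + dy]subr0 lcoefM (smul_window (N := 1) (has_deg_le hx) (has_deg_le hy)) //.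
rewrite coefM big_ord1 !coef_poly /= !subr0 mulf_neq0 //; [by case: hx | by case: hy].
Qed.

Lemma has_degV x d : has_deg x d -> has_deg x^-1 (- d).
Proof.
move=> h; split; last by rewrite lcoefV -(ltop_is_top h); exact: sinv_vanishes_above.
by rewrite -[- d]subr0 lcoefV sinv_coef // /inv_coef /= subr0 invr_eq0; case: h.
Qed.

Lemma has_degDl x y d e : has_deg x d -> deg_le y e -> e < d -> has_deg (x + y) d.
Proof.
move=> [h1 h2] hy lt; split; first by rewrite lcoefD (hy d lt) addr0.
by move=> k lt'; rewrite lcoefD h2 // hy ?addr0 //; apply: lt_trans lt'.
Qed.

Lemma deg_le_lt (x : lseries) (N : int) : deg_le x (N - 1) -> (deg (lcoef x) < N%:E)%E.
Proof.
move=> h; case: (pselect (exists d, is_top (lcoef x) d)) => [[d hd]|nt].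
  rewrite (deg_is_top hd) lte_fin; case: (ltP d N) => // le.
  by case: hd => hd _; rewrite h ?eqxx in hd; lia.
by rewrite (deg_no_top nt) ltNye.
Qed.

Lemma deg_lt_le (x : lseries) (N : int) : (deg (lcoef x) < N%:E)%E -> deg_le x (N - 1).
Proof.
move=> hd; case: (pselect (exists d, is_top (lcoef x) d)) => [[d td]|nt].
  by rewrite (deg_is_top td) lte_fin in hd; apply: vanishes_aboveW (proj2 td) _; lia.
have [t ht] := lseries_vanishes_above x.
move=> k _; apply/eqP; apply: contraT => nz; case: nt; exact: is_top_exists ht nz.
Qed.

Lemma deg_leE (x : lseries) t : deg_le x t -> (deg (lcoef x) <= t%:E)%E.
Proof.
move=> h; have := @deg_le_lt x (t + 1); rewrite addrK => /(_ h).
case: (deg _) => [e||] //; last by rewrite leNye.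
by rewrite lte_fin lee_fin => lt; rewrite -ltzD1.
Qed.

Lemma lpoly0 : lpoly 0 = 0.
Proof. by apply: lseriesP => k; rewrite /= /poly2s coef0; case: ifP. Qed.

Lemma lpolyD : {morph lpoly : p q / p + q}.
Proof.
move=> p q; apply: lseriesP => k; rewrite lcoefD /= /poly2s coefD.
by case: ifP; rewrite ?addr0.
Qed.

HB.instance Definition _ :=
  GRing.isNmodMorphism.Build {poly rat} lseries lpoly (lpoly0, lpolyD).

Lemma lcoef_mulC x c k : lcoef (x * lpoly c%:P) k = lcoef x k * c.
Proof.
have [tx hx] := lseries_vanishes_above x.
have h0 : vanishes_above (poly2s c%:P) 0.
  by apply: vanishes_aboveW (@poly2s_vanishes_above _) _; have := size_polyC_leq1 c; lia.
rewrite lcoefM; have [lt|[n ->]] := ltz_or_subn (tx + 0) k.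
  by rewrite (vanishes_above_smul hx h0) // hx ?mul0r //; lia.
rewrite (smul_window (N := n.+1) hx h0) // window_poly2sC //.
by rewrite coefMC coef_poly ltnSn addr0.
Qed.

Lemma lcoef_mulX x k : lcoef (x * lpoly 'X) k = lcoef x (k - 1).
Proof.
have [tx hx] := lseries_vanishes_above x.
have h1 : vanishes_above (poly2s 'X) 1.
  by apply: vanishes_aboveW (@poly2s_vanishes_above 'X) _; rewrite size_polyX.
have [lt|[n ->]] := ltz_or_subn (tx + 1) k.
  by rewrite lcoefM (vanishes_above_smul hx h1) // hx //; lia.
rewrite lcoefM (smul_window (N := n.+1) hx h1) //.
have -> : window (poly2s 'X) 1 n.+1 = 1.
  apply/polyP => j; rewrite coef_poly coefC /poly2s.
  case: j => [|j] /=; first by rewrite coefX.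
  case: ifP => // h; case: ifP => // h'; rewrite coefX.
  by have -> : (`|(1 - j.+1%:Z)%R|%N == 1%N) = false by apply/negbTE/eqP; lia.
by rewrite mulr1 coef_poly ltnSn; congr (lcoef x _); lia.
Qed.

Lemma lpolyCM c q : lpoly (c%:P * q) = lpoly c%:P * lpoly q.
Proof.
apply: lseriesP => k; rewrite [lpoly _ * _]mulrC lcoef_mulC /= /poly2s coefCM.
by case: ifP; rewrite ?mul0r // mulrC.
Qed.

Lemma lpolyXM q : lpoly ('X * q) = lpoly 'X * lpoly q.
Proof.
apply: lseriesP => k; rewrite [lpoly _ * _]mulrC lcoef_mulX /= /poly2s coefXM.
have [le0|gt0] := leP k 0.
  have [->|ne] := eqVneq k 0; first by rewrite eqxx.
  by rewrite !ifF //; lia.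
have -> : (0 <= k) = true by lia.
have -> : (0 <= k - 1) = true by lia.
have -> : (`|k|%N == 0%N) = false by apply/negbTE/eqP; lia.
by congr (q`_ _); lia.
Qed.

Lemma lpolyM : {morph lpoly : p q / p * q}.
Proof.
move=> p; elim/poly_ind: p => [|p c IH] q; first by rewrite mul0r lpoly0 mul0r.
rewrite mulrDl !lpolyD lpolyCM -(mulrA p) IH (IH 'X) lpolyXM.
by rewrite mulrDl mulrA.
Qed.

HB.instance Definition _ := GRing.isMonoidMorphism.Build {poly rat} lseries lpoly
  (erefl, lpolyM).

Lemma lpolyB p q : lpoly (p - q) = lpoly p - lpoly q.
Proof. exact: rmorphB. Qed.

Lemma lpoly_inj : injective lpoly.
Proof.
move=> p q /eqP; rewrite -subr_eq0 -rmorphB => /lseries_eq0P h.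
by apply/eqP; rewrite -subr_eq0; apply/eqP/polyP => j; have := h j%:Z; rewrite coef0 /= /poly2s.
Qed.

Lemma deg_le_lpoly p : deg_le (lpoly p) ((size p)%:Z - 1).
Proof. exact: poly2s_vanishes_above. Qed.

Lemma has_deg_lpoly p : p != 0 -> has_deg (lpoly p) ((size p)%:Z - 1).
Proof.
move=> nz; split; last exact: deg_le_lpoly.
have hs : (0 < size p)%N by rewrite size_poly_gt0.
have hl : p`_(size p).-1 != 0 by rewrite -lead_coefE lead_coef_eq0.
rewrite /= /poly2s; move: (size p) hs hl => s hs hl.
by rewrite ifT; [have -> : `|(s%:Z - 1)%R|%N = s.-1 by lia | lia].
Qed.

Lemma lcoef_mulXn x (i : nat) k : lcoef (x * lpoly 'X^i) k = lcoef x (k - i%:Z).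
Proof.
elim: i k => [|i IH] k; first by rewrite expr0 rmorph1 mulr1 subr0.
by rewrite exprSr rmorphM mulrA lcoef_mulX IH; congr (lcoef x _); lia.
Qed.

Lemma lcoef_mul_lpoly (u : lseries) (Y : {poly rat}) (N : nat) k : (size Y <= N.+1)%N ->
  lcoef (u * lpoly Y) k = \sum_(i < N.+1) Y`_i * lcoef u (k - i%:Z).
Proof.
move=> hs; have eY : Y = \sum_(i < N.+1) Y`_i *: 'X^i.
  rewrite -poly_def; apply/polyP => j; rewrite coef_poly.
  by case: ltnP => // le; rewrite nth_default // (leq_trans hs le).
rewrite [in LHS]eY rmorph_sum mulr_sumr lcoef_sum; apply: eq_bigr => i _.
by rewrite -mul_polyC rmorphM mulrCA mulrC lcoef_mulC lcoef_mulXn mulrC.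
Qed.

Fixpoint cf_conv (c : nat -> {poly rat}) (n : nat) : lseries :=
  if n is n'.+1 then lpoly (c 0%N) + (cf_conv (fun j => c j.+1) n')^-1
  else lpoly (c 0%N).

Lemma cf_convE c n : lcoef (cf_conv c n) = cf_fin c n.
Proof. by elim: n c => //= n IH c; rewrite -IH. Qed.

Definition cf_proper (c : nat -> {poly rat}) := forall j, (0 < j)%N -> (1 < size (c j))%N.

Lemma cf_proper_tail c : cf_proper c -> cf_proper (fun j => c j.+1) /\ (1 < size (c 1%N))%N.
Proof. by move=> h; split; [move=> j _; apply: h | apply: h]. Qed.

Lemma has_deg_lpoly_gt1 (p : {poly rat}) :
  (1 < size p)%N -> has_deg (lpoly p) ((size p)%:Z - 1).
Proof. by move=> h; apply: has_deg_lpoly; rewrite -size_poly_gt0; lia. Qed.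

Lemma has_deg_cf_conv c n : cf_proper c -> (1 < size (c 0%N))%N ->
  has_deg (cf_conv c n) ((size (c 0%N))%:Z - 1).
Proof.
elim: n c => [|n IH] c hc h0 /=; first exact: has_deg_lpoly_gt1.
have [hc' h1] := cf_proper_tail hc.
apply: has_degDl (has_deg_lpoly_gt1 h0) (has_deg_le (has_degV (IH _ hc' h1))) _.
by move: h0 h1; set s0 := size (c 0%N); set s1 := size (c 1%N); lia.
Qed.

Lemma cf_conv_tail_deg_le c n : cf_proper c -> deg_le (cf_conv (fun j => c j.+1) n)^-1 (-1).
Proof.
move=> hc; have [hc' h1] := cf_proper_tail hc.
apply: deg_leW (has_deg_le (has_degV (has_deg_cf_conv n hc' h1))) _.
by move: h1; set s1 := size (c 1%N); lia.
Qed.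

(* [(c_0 + 1/y') - (c_0 + 1/y) = (y - y') / (y y')] with tails [y], [y'] of
   degree [>= 1]: each level of the continued fraction gains one order. *)
Lemma cf_convS_sub c n : cf_proper c -> deg_le (cf_conv c n.+1 - cf_conv c n) (- (n%:Z + 1)).
Proof.
elim: n c => [|n IH] c hc.
  have -> : cf_conv c 1 - cf_conv c 0 = (cf_conv (fun j => c j.+1) 0)^-1.
    by rewrite [cf_conv c 1]/= addrC addKr.
  exact: cf_conv_tail_deg_le.
have [hc' h1] := cf_proper_tail hc; set c' := fun j => c j.+1.
have nz1 := has_deg_neq0 (has_deg_cf_conv n.+1 hc' h1).
have nz0 := has_deg_neq0 (has_deg_cf_conv n hc' h1).
have -> : cf_conv c n.+2 - cf_conv c n.+1 =
    - (cf_conv c' n.+1 - cf_conv c' n) * ((cf_conv c' n.+1)^-1 * (cf_conv c' n)^-1).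
  change (cf_conv c n.+2) with (lpoly (c 0%N) + (cf_conv c' n.+1)^-1).
  change (cf_conv c n.+1) with (lpoly (c 0%N) + (cf_conv c' n)^-1).
  by field; rewrite nz1 nz0.
have -> : - (n.+1%:Z + 1) = - (n%:Z + 1) + -1 by lia.
apply: deg_leM; first exact/deg_leN/IH.
by apply: deg_leW (deg_leM (cf_conv_tail_deg_le n.+1 hc) (cf_conv_tail_deg_le n hc)) _.
Qed.

Lemma cf_conv_sub c n m : cf_proper c -> (n <= m)%N ->
  deg_le (cf_conv c m - cf_conv c n) (- (n%:Z + 1)).
Proof.
move=> hc; elim: m => [|m IH]; first by rewrite leqn0 => /eqP ->; rewrite subrr.
rewrite leq_eqVlt => /orP [/eqP -> | lt]; first by rewrite subrr.
have -> : cf_conv c m.+1 - cf_conv c n =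
    (cf_conv c m.+1 - cf_conv c m) + (cf_conv c m - cf_conv c n) by rewrite addrA subrK.
apply: deg_leD; last exact: IH.
by apply: deg_leW (cf_convS_sub (n := m) hc) _; lia.
Qed.

(* The coefficient of [T^k] is the same in every convergent of index [>= |k|]. *)
Definition cf_limit_coef c : series := fun k => lcoef (cf_conv c `|k|%N) k.

Lemma cf_limit_coef_vanishes_above c : cf_proper c ->
  vanishes_above (cf_limit_coef c) (Num.max ((size (c 0%N))%:Z - 1) 0).
Proof.
move=> hc k lt; rewrite /cf_limit_coef; case: `|k|%N => [|n].
  by rewrite (@deg_le_lpoly (c 0%N)) //; move: lt; rewrite gt_max; lia.
rewrite lcoefD (@deg_le_lpoly (c 0%N)); last by move: lt; rewrite gt_max; lia.
by rewrite (cf_conv_tail_deg_le n hc) ?add0r //; move: lt; rewrite gt_max; lia.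
Qed.

Lemma cf_limit_coefE c n k : cf_proper c -> (`|k| <= n)%N ->
  lcoef (cf_conv c n) k = cf_limit_coef c k.
Proof.
move=> hc le; apply/eqP; rewrite -subr_eq0 -lcoefB.
by apply/eqP/(cf_conv_sub hc le); lia.
Qed.

Lemma cf_limit c : cf_proper c -> exists x : lseries,
  forall n, deg_le (x - cf_conv c n) (- (n%:Z + 1)).
Proof.
move=> hc; exists (LSeries (vanishes_above_laurent (cf_limit_coef_vanishes_above hc))).
move=> n k lt; rewrite lcoefB /= -(cf_limit_coefE hc (leq_maxr n `|k|%N)) -lcoefB.
by apply: (cf_conv_sub hc (leq_maxl n `|k|%N)).
Qed.

Lemma cf_value_exists c : cf_proper c -> exists x : lseries, cf_value c (lcoef x).
Proof.
move=> hc; have [x hx] := cf_limit hc; exists x; split; first exact: lcoefP.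
move=> N; exists `|N|%N => n le; rewrite -cf_convE; apply: (@deg_le_lt (x - cf_conv c n)).
by apply: deg_leW (hx n) _; lia.
Qed.

Lemma cf_value_approx c (x : lseries) : cf_value c (lcoef x) ->
  forall N, exists n, deg_le (x - cf_conv c n) (N - 1).
Proof.
move=> [_ h] N; have [n0 hn] := h N; exists n0; apply: deg_lt_le.
by have := hn n0 (leqnn _); rewrite -cf_convE.
Qed.

Lemma cf_value_has_deg c (x : lseries) : cf_proper c -> (1 < size (c 0%N))%N ->
  cf_value c (lcoef x) -> has_deg x ((size (c 0%N))%:Z - 1).
Proof.
move=> hc h0 hx; have [n hn] := cf_value_approx hx 0.
have -> : x = cf_conv c n + (x - cf_conv c n) by rewrite addrC subrK.
apply: has_degDl (has_deg_cf_conv n hc h0) hn _.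
by move: h0; set s0 := size (c 0%N); lia.
Qed.

Lemma cf_value_deg_le c (x : lseries) : cf_proper c -> c 0%N = 0 ->
  cf_value c (lcoef x) -> deg_le x (-1).
Proof.
move=> hc h0 hx; have [n hn] := cf_value_approx hx 0.
have -> : x = cf_conv c n + (x - cf_conv c n) by rewrite addrC subrK.
apply: deg_leD; last exact: hn.
case: n {hn} => [|n] /=; rewrite h0 lpoly0 ?add0r //.
exact: cf_conv_tail_deg_le.
Qed.

Section Lambda.
Variable g : int -> {poly rat}.
Hypothesis g_deg : forall i, (1 < size (g i))%N.

Lemma cf_proper_forward i : cf_proper (fun j : nat => g (i + j%:Z)).
Proof. by move=> j _; apply: g_deg. Qed.

Lemma cf_proper_backward i :
  cf_proper (fun j : nat => if j == 0%N then 0 else g (i - j%:Z)).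
Proof. by move=> j hj; rewrite ifF; [apply: g_deg | lia]. Qed.

Lemma lambda_exists i : exists l, is_lambda g i l.
Proof.
have [x hx] := cf_value_exists (cf_proper_forward i).
have [y hy] := cf_value_exists (cf_proper_backward i).
by exists (sadd (lcoef x) (lcoef y)), (lcoef x), (lcoef y).
Qed.

Lemma deg_lambda i l : is_lambda g i l -> deg l = ((size (g i))%:Z - 1)%:E.
Proof.
move=> [x [y [hx [hy ->]]]].
pose X := LSeries (proj1 hx); pose Y := LSeries (proj1 hy).
have dX : has_deg X ((size (g i))%:Z - 1).
  by have := @cf_value_has_deg _ X (cf_proper_forward i) (g_deg (i + 0%:Z)) hx; rewrite addr0.
have dY : deg_le Y (-1) := @cf_value_deg_le _ Y (cf_proper_backward i) (erefl _) hy.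
apply: (@deg_has_deg (X + Y)); apply: has_degDl dX dY _.
by move: (g_deg i); set s := size (g i); lia.
Qed.

End Lambda.

Definition qform (n : nat) (X Y : {poly rat}) := X * X - 'X^n * X * Y - Y * Y.

Lemma qform_swap n X Y : qform n (- Y) X = - qform n X Y.
Proof. by rewrite /qform; ring. Qed.

Lemma qform_eq0_factor n X Y : qform n X Y = 0 -> X * (X - 'X^n * Y) = Y * Y.
Proof. by move=> h; apply/eqP; rewrite -subr_eq0 -h /qform; apply/eqP; ring. Qed.

Lemma qform_descent n X Y : qform n X Y = 0 -> X != 0 -> Y != 0 ->
  (size Y < size X)%N ->
  let Z := X - 'X^n * Y in [/\ qform n Y Z = 0, Z != 0 & (size Z < size Y)%N].
Proof.
move=> hq nX nY lt Z; have e := qform_eq0_factor hq; rewrite -/Z in e.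
have nZ : Z != 0.
  apply: contraNneq nY => Z0; move: e; rewrite Z0 mulr0 => /esym/eqP.
  by rewrite mulf_eq0 orbb.
split => //; first by rewrite /qform -e /Z; ring.
have := congr1 (fun p : {poly rat} => size p) e; rewrite !size_mul //.
have := size_poly_gt0 Z; have := size_poly_gt0 Y; rewrite nZ nY.
by move: lt; set sx := size X; set sy := size Y; set sz := size Z; lia.
Qed.

Lemma qform_size_neq n X Y : (0 < n)%N -> qform n X Y = 0 -> X != 0 -> Y != 0 ->
  size X != size Y.
Proof.
move=> hn hq nX nY; apply/eqP => es.
have e := qform_eq0_factor hq; set Z := X - 'X^n * Y in e.
have sY : (0 < size Y)%N by rewrite size_poly_gt0.
have sXY : size ('X^n * Y) = (n + size Y)%N.
  rewrite size_mul ?size_polyXn; first by move: sY; set sy := size Y; lia.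
    exact: monic_neq0 (monicXn _ n).
  by rewrite -size_poly_gt0.
have sZ : size Z = (n + size Y)%N.
  by rewrite /Z addrC size_polyDl size_polyN sXY // es; move: hn; set sy := size Y; lia.
have nZ : Z != 0 by rewrite -size_poly_gt0 sZ; lia.
have := congr1 (fun p : {poly rat} => size p) e; rewrite !size_mul // sZ es.
by move: hn sY; set sy := size Y; lia.
Qed.

(* Infinite descent on [size X + size Y], by [qform_descent]. *)
Lemma qform_anisotropic n X Y : (0 < n)%N -> qform n X Y = 0 -> X = 0 /\ Y = 0.
Proof.
move=> hn; move: {2}(size X + size Y)%N (leqnn (size X + size Y)) => m.
elim: m X Y => [|m IH] X Y hm hq.
  by move: hm; rewrite leqn0 addn_eq0 !size_poly_eq0 => /andP [/eqP -> /eqP ->].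
have [Y0|nY] := eqVneq Y 0.
  have /eqP : X * X = 0 by rewrite -hq /qform Y0; ring.
  by rewrite mulf_eq0 orbb => /eqP.
have [X0|nX] := eqVneq X 0.
  have /eqP : Y * Y = 0 by rewrite -oppr0 -hq /qform X0; ring.
  by rewrite mulf_eq0 orbb (negPf nY).
have hne := qform_size_neq hn hq nX nY.
case: (ltngtP (size Y) (size X)) => [lt|lt|eq]; last by rewrite eq eqxx in hne.
  have [hq' nZ lt'] := qform_descent hq nX nY lt.
  have [] := IH _ _ _ hq'; last by move=> Y0; rewrite Y0 eqxx in nY.
  by move: hm lt'; set sx := size X; set sy := size Y; set sz := size (X - _); lia.
have hq2 : qform n (- Y) X = 0 by rewrite qform_swap hq oppr0.
have nY' : - Y != 0 by rewrite oppr_eq0.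
have lt2 : (size X < size (- Y))%N by rewrite size_polyN.
have [hq' nZ lt'] := qform_descent hq2 nY' nX lt2.
have [] := IH _ _ _ hq'; last by move=> X0; rewrite X0 eqxx in nX.
by move: hm lt'; set sx := size X; set sy := size Y; set sz := size (- Y - _); lia.
Qed.

(* The witness is the continued fraction [[T^n, T^n, ...]]. *)
Lemma cf_Xn_root n : (0 < n)%N ->
  exists a : lseries, has_deg a n%:Z /\ a * a = lpoly 'X^n * a + 1.
Proof.
move=> hn; set c := fun _ : nat => ('X^n : {poly rat}).
have hc : cf_proper c by move=> j _; rewrite /c size_polyXn.
have dc m : has_deg (cf_conv c m) n%:Z.
  have h0 : (1 < size (c 0%N))%N by rewrite /c size_polyXn.
  have := has_deg_cf_conv m hc h0; rewrite /c size_polyXn.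
  by have -> : n.+1%:Z - 1 = n%:Z by lia.
have [a ha] := cf_limit hc.
have da : has_deg a n%:Z.
  have -> : a = cf_conv c 0 + (a - cf_conv c 0) by rewrite addrC subrK.
  by apply: has_degDl (dc 0%N) (ha 0%N) _; lia.
have na := has_deg_neq0 da.
suff fix_a : a = lpoly 'X^n + a^-1 by exists a; split; rewrite // {1}fix_a mulrDl mulVf.
apply/eqP; rewrite -subr_eq0; apply/eqP/deg_le_eq0 => t; set m := `|t|%N.
have nm := has_deg_neq0 (dc m).
have -> : a - (lpoly 'X^n + a^-1) =
    (a - cf_conv c m.+1) + (a - cf_conv c m) * ((cf_conv c m)^-1 * a^-1).
  by change (cf_conv c m.+1) with (lpoly 'X^n + (cf_conv c m)^-1); field; rewrite nm na.
apply: deg_leD; first by apply: deg_leW (ha m.+1) _; lia.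
have dinv : deg_le ((cf_conv c m)^-1 * a^-1) (- n%:Z + - n%:Z).
  exact: deg_leM (has_deg_le (has_degV (dc m))) (has_deg_le (has_degV da)).
by apply: deg_leW (deg_leM (ha m) dinv) _; lia.
Qed.

Lemma cf_Xn_root_notin_QT n (a : lseries) : (0 < n)%N ->
  a * a = lpoly 'X^n * a + 1 -> ~ in_QT (lcoef a).
Proof.
move=> hn ha [p [q [nq e]]].
have qa : lpoly q * a = lpoly p by apply: lseriesP => k; rewrite lcoefM e.
suff /(qform_anisotropic hn) [_ q0] : qform n p q = 0 by rewrite q0 eqxx in nq.
apply: lpoly_inj; rewrite rmorph0 /qform !rmorphB !rmorphM /= -qa.
have -> : lpoly q * a * (lpoly q * a) - lpoly 'X^n * (lpoly q * a) * lpoly q -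
    lpoly q * lpoly q = lpoly q * lpoly q * (a * a - lpoly 'X^n * a - 1) by ring.
by rewrite ha; ring.
Qed.

(* Box principle: the [N] coefficients of [u Y] at [T^-1, ..., T^-N] are
   linear forms in the [N + 1] coefficients of [Y], so some [Y != 0] kills them all. *)
Lemma dirichlet_approx (u : lseries) (N : nat) : exists X Y : {poly rat},
  [/\ Y != 0, (size Y <= N.+1)%N & deg_le (lpoly X + u * lpoly Y) (- (N%:Z + 1))].
Proof.
pose M : 'M[rat]_(N.+1, N) := \matrix_(i, r) lcoef u (- ((r : nat)%:Z + 1) - (i : nat)%:Z).
have /rowV0Pn [y /sub_kermxP yM ny] : kermx M != 0.
  by rewrite -mxrank_eq0 mxrank_ker; have := rank_leq_col M; lia.
pose Y : {poly rat} := \poly_(i < N.+1) y 0 (inord i).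
have sY : (size Y <= N.+1)%N by apply: size_poly.
have nY : Y != 0.
  apply: contraNneq ny => Y0; apply/eqP/rowP => j; rewrite mxE.
  by have /polyP/(_ j) := Y0; rewrite coef_poly ltn_ord inord_val coef0.
have uY0 r : (r < N)%N -> lcoef (u * lpoly Y) (- (r%:Z + 1)) = 0.
  move=> hr; rewrite (lcoef_mul_lpoly _ _ sY).
  transitivity ((y *m M) 0 (Ordinal hr)); last by rewrite yM mxE.
  by rewrite !mxE; apply: eq_bigr => i _; rewrite coef_poly ltn_ord inord_val !mxE.
have [t ht] := lseries_vanishes_above (u * lpoly Y).
exists (- \poly_(k < `|t|.+1) lcoef (u * lpoly Y) k%:Z), Y; split => // k lt.
rewrite lcoefD /= /poly2s coefN coef_poly; case: (leP 0 k) => hk.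
  case: ltnP => hK; first by rewrite (_ : `|k|%N%:Z = k) ?addNr //; lia.
  by rewrite oppr0 add0r; apply: ht; lia.
rewrite add0r (_ : k = - (`|(- k - 1)%R|%N%:Z + 1)); last by lia.
by apply: uY0; lia.
Qed.

Lemma lcoef_natr n k : lcoef (n%:R : lseries) k = (k == 0)%:R *+ n.
Proof. by rewrite lcoef_natmul lcoef1 poly2s1. Qed.

Lemma lseries_natr_neq0 n : (0 < n)%N -> (n%:R : lseries) != 0.
Proof.
move=> hn; apply/eqP => /(congr1 (lcoef^~ 0)); rewrite lcoef_natr eqxx lcoef0.
by move/eqP; rewrite pnatr_eq0; lia.
Qed.

Lemma deg_le_natr n : deg_le (n%:R : lseries) 0.
Proof. by move=> k lt; rewrite lcoef_natr (_ : (k == 0) = false) ?mul0rn //; lia. Qed.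

Lemma disc_lcoef (a b c : lseries) :
  disc (lcoef a) (lcoef b) (lcoef c) = lcoef (b * b - 4%:R * (a * c)).
Proof. by apply: funext => k; rewrite /disc /sadd /sopp /sscale lcoefB !mulr_natl lcoef_natmul. Qed.

Lemma qf_eval_lcoef (a b c : lseries) X Y : qf_eval (lcoef a) (lcoef b) (lcoef c) X Y =
  lcoef (a * lpoly X * lpoly X + b * lpoly X * lpoly Y + c * lpoly Y * lpoly Y).
Proof.
rewrite -[qf_eval _ _ _ _ _]/(lcoef (a * lpoly (X * X) +
  (b * lpoly (X * Y) + c * lpoly (Y * Y)))).
by rewrite !lpolyM !mulrA addrA.
Qed.

Lemma binary_form_factor (a b c s : lseries) : a != 0 -> s * s = b * b - 4%:R * (a * c) ->
  let u := (b - s) / (2%:R * a) in let w := (b + s) / (2%:R * a) in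
  w - u = s / a /\
  forall x y, a * x * x + b * x * y + c * y * y = a * (x + u * y) * (x + w * y).
Proof.
move=> na hs u w; have n2 := @lseries_natr_neq0 2 isT.
have n4 : (4%:R : lseries) != 0 by apply: lseries_natr_neq0.
split; first by rewrite /u /w; field; rewrite na n2.
have sum_uw : a * (u + w) = b by rewrite /u /w; field; rewrite na n2.
have prod_uw : a * (u * w) = c.
  have -> : a * (u * w) = (b * b - s * s) / (4%:R * a).
    by rewrite /u /w; field; rewrite na n2 n4.
  by rewrite hs; field; rewrite na n4.
by move=> x y; rewrite -sum_uw -prod_uw; ring.
Qed.

(* Approximate the root [-u] of the form by Dirichlet to order [N]; the other
   factor [x + w y] then has degree at most [deg (s / a) + N]. *)
Lemma binary_form_small_value (a b c s : lseries) d :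
  s * s = b * b - 4%:R * (a * c) -> has_deg s d ->
  exists X Y : {poly rat}, (X != 0 \/ Y != 0) /\
    deg_le (a * lpoly X * lpoly X + b * lpoly X * lpoly Y + c * lpoly Y * lpoly Y) (d - 1).
Proof.
move=> hs ds; have [a0|na] := eqVneq a 0.
  exists 1, 0; split; first by left; rewrite oner_neq0.
  by rewrite a0 rmorph0 !(mulr0, mul0r, addr0).
have [da ha] := has_deg_exists na.
have [uw factor] := binary_form_factor na hs.
set u := (b - s) / _ in uw factor; set w := (b + s) / _ in uw factor.
set N := `|(da - d)%R|%N.
have [X [Y [nY sY dz1]]] := dirichlet_approx u N.
exists X, Y; split; first by right.
rewrite factor; have -> : lpoly X + w * lpoly Y = (lpoly X + u * lpoly Y) + s / a * lpoly Y.
  by rewrite -uw; ring.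
have dY : deg_le (lpoly Y) N%:Z.
  by apply: deg_leW (@deg_le_lpoly Y) _; move: sY; set sy := size Y; lia.
have dsa : deg_le (s / a) (d + - da) := has_deg_le (has_degM ds (has_degV ha)).
have dz2 : deg_le (lpoly X + u * lpoly Y + s / a * lpoly Y) (d - da + N%:Z).
  apply: deg_leD; first by apply: deg_leW dz1 _; lia.
  exact: deg_leM dsa dY.
by apply: deg_leW (deg_leM (deg_leM (has_deg_le ha) dz1) dz2) _; lia.
Qed.

Lemma is_mQ_le A B C d m : is_bqf A B C -> indefinite A B C ->
  deg (disc A B C) = (2 * d)%:E -> is_mQ A B C m -> (m <= (d - 1)%:E)%E.
Proof.
move=> [hA [hB [hC _]]] [nD [S [hS SS]]] dD [m_lb _].
pose a := LSeries hA; pose b := LSeries hB; pose c := LSeries hC; pose s := LSeries hS.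
change A with (lcoef a) in nD, dD, SS, m_lb; change B with (lcoef b) in nD, dD, SS, m_lb.
change C with (lcoef c) in nD, dD, SS, m_lb; change S with (lcoef s) in SS.
rewrite disc_lcoef in nD dD SS.
have ss : s * s = b * b - 4%:R * (a * c) by apply: lseriesP => k; rewrite lcoefM SS.
have ns : s != 0 by apply: contra_notN nD => /eqP s0; rewrite -ss s0 mul0r.
have [e de] := has_deg_exists ns.
have ed : e = d.
  by move: dD; rewrite -ss (deg_has_deg (has_degM de de)) => -[]; lia.
rewrite ed in de; have [X [Y [nXY small]]] := binary_form_small_value ss de.
apply: le_trans (m_lb _ _) (deg_leE small).
by exists X, Y; rewrite qf_eval_lcoef.
Qed.

Lemma markov_spectrum_ge1 v : markov_spectrum v -> (1%:E <= v)%E.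
Proof.
move=> [A [B [C [hq [hi [d [m [dD [hm ->]]]]]]]]].
have := is_mQ_le hq hi dD hm; case: m {hm} => [m'| |] //=.
by rewrite !lee_fin; lia.
Qed.

Lemma is_bqf_lcoef (a b c : lseries) :
  ~ (in_QT (lcoef a) /\ in_QT (lcoef b) /\ in_QT (lcoef c)) ->
  is_bqf (lcoef a) (lcoef b) (lcoef c).
Proof. by move=> h; split; [|split; [|split]]; rewrite ?h //; exact: lcoefP. Qed.

Lemma indefinite_lcoef (a b c s : lseries) : s != 0 -> s * s = b * b - 4%:R * (a * c) ->
  indefinite (lcoef a) (lcoef b) (lcoef c).
Proof.
move=> ns ss; rewrite /indefinite disc_lcoef -ss.
split; last by exists (lcoef s); split; first exact: lcoefP.
move=> s2_0; have /lseries_eq0P : forall k, lcoef (s * s) k = 0 by rewrite s2_0.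
by rewrite mulf_eq0 (negPf ns).
Qed.

Lemma qf_eval_Xn_root n (a : lseries) X Y :
  qf_eval (lcoef a) (lcoef (- (lpoly 'X^n * a))) (lcoef (- a)) X Y =
  lcoef (a * lpoly (qform n X Y)).
Proof. by rewrite qf_eval_lcoef /qform !lpolyB !lpolyM; congr lcoef; ring. Qed.

Lemma is_mQ_Xn_root n (a : lseries) : (0 < n)%N -> has_deg a n%:Z ->
  is_mQ (lcoef a) (lcoef (- (lpoly 'X^n * a))) (lcoef (- a)) n%:Z%:E.
Proof.
move=> hn da; split => [_ [X [Y [nXY ->]]] | z z_lb].
  have nq : qform n X Y != 0.
    by apply/eqP => /(qform_anisotropic hn) [X0 Y0]; case: nXY; rewrite ?X0 ?Y0 eqxx.
  rewrite qf_eval_Xn_root (deg_has_deg (has_degM da (has_deg_lpoly nq))) lee_fin.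
  by have := size_poly_gt0 (qform n X Y); rewrite nq; set sq := size _; lia.
have q10 : qform n 1 0 = 1 by rewrite /qform; ring.
apply: z_lb; exists 1, 0; split; first by left; exact: oner_neq0.
by rewrite qf_eval_Xn_root q10 mulr1 (deg_has_deg da).
Qed.

Lemma markov_spectrum_natr n : (0 < n)%N -> markov_spectrum n%:Z%:E.
Proof.
move=> hn; have [a [da ha]] := cf_Xn_root hn.
set b := - (lpoly 'X^n * a); set c := - a; set s := a * (2%:R * a - lpoly 'X^n).
have eD : b * b - 4%:R * (a * c) = a * a * (lpoly 'X^n * lpoly 'X^n + 4%:R).
  by rewrite /b /c; ring.
have ss : s * s = b * b - 4%:R * (a * c).
  apply/eqP; rewrite -subr_eq0; apply/eqP; rewrite eD.
  have -> : s * s - a * a * (lpoly 'X^n * lpoly 'X^n + 4%:R) =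
      4%:R * (a * a) * (a * a - (lpoly 'X^n * a + 1)) by rewrite /s; ring.
  by rewrite ha subrr mulr0.
have dXn : has_deg (lpoly 'X^n) n%:Z.
  by have := has_deg_lpoly (monic_neq0 (monicXn rat n)); rewrite size_polyXn; congr has_deg; lia.
have dD : has_deg (b * b - 4%:R * (a * c)) ((n%:Z + n%:Z) + (n%:Z + n%:Z)).
  rewrite eD; apply: has_degM (has_degM da da) _.
  by apply: has_degDl (has_degM dXn dXn) (deg_le_natr 4) _; lia.
exists (lcoef a), (lcoef b), (lcoef c); split.
  by apply: is_bqf_lcoef => -[/(cf_Xn_root_notin_QT hn ha)].
have ns : s != 0 by apply: contraNneq (has_deg_neq0 dD) => s0; rewrite -ss s0 mul0r.
split; first exact: indefinite_lcoef ns ss.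
exists (2 * n%:Z), n%:Z%:E; split.
  by rewrite disc_lcoef (deg_has_deg dD); congr EFin; lia.
by split; [exact: is_mQ_Xn_root | congr EFin; lia].
Qed.

Lemma markov_spectrum_infty : markov_spectrum +oo%E.
Proof.
have [a [da ha]] := cf_Xn_root (isT : (0 < 1)%N).
have ss : a * a = a * a - 4%:R * (0 * 0) by rewrite mulr0 mulr0 subr0.
exists (lcoef 0), (lcoef a), (lcoef 0); split.
  by apply: is_bqf_lcoef => -[_ [/(cf_Xn_root_notin_QT (n := 1) isT ha)]].
split; first exact: indefinite_lcoef (has_deg_neq0 da) ss.
exists 1, -oo%E; split; first by rewrite disc_lcoef -ss (deg_has_deg (has_degM da da)).
split => //; split => [y _ | z z_lb]; first exact: leNye.
apply: z_lb; exists 1, 0; split; first by left; exact: oner_neq0.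
by rewrite qf_eval_lcoef rmorph0 !(mulr0, mul0r, addr0) deg_lcoef0.
Qed.

Lemma is_M_ge1 (g : int -> {poly rat}) v :
  (forall i, (1 < size (g i))%N) -> is_M g v -> (1%:E <= v)%E.
Proof.
move=> hg [v_ub _]; have [l hl] := lambda_exists hg 0.
apply: le_trans (v_ub _ _); last by exists 0, l.
by rewrite (deg_lambda hg hl) lee_fin; move: (hg 0); set s := size (g 0); lia.
Qed.

Lemma is_M_const_Xn n : (0 < n)%N -> is_M (fun _ => 'X^n) n%:Z%:E.
Proof.
move=> hn; have hg (i : int) : (1 < size ('X^n : {poly rat}))%N by rewrite size_polyXn.
have deg_l i l : is_lambda (fun _ => 'X^n) i l -> deg l = n%:Z%:E.
  by move=> hl; rewrite (deg_lambda hg hl) size_polyXn; congr EFin; lia.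
split => [_ [i [l [hl ->]]] | z z_ub]; first by rewrite (deg_l _ _ hl).
have [l hl] := lambda_exists hg 0; rewrite -(deg_l _ _ hl).
by apply: z_ub; exists 0, l.
Qed.

Lemma is_M_Xn_unbounded : is_M (fun i => 'X^(`|i|%N.+1)) +oo%E.
Proof.
have hg (i : int) : (1 < size ('X^(`|i|%N.+1) : {poly rat}))%N by rewrite size_polyXn.
split => [y _ | z z_ub]; first exact: leey.
case: z z_ub => [z||] z_ub //.
  have [l hl] := lambda_exists hg `|z|%N%:Z.
  have : (deg l <= z%:E)%E by apply: z_ub; exists `|z|%N%:Z, l.
  by rewrite (deg_lambda hg hl) size_polyXn lee_fin; lia.
have [l hl] := lambda_exists hg 0.
have : (deg l <= -oo)%E by apply: z_ub; exists 0, l.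
by rewrite (deg_lambda hg hl).
Qed.

Lemma markov_spectrumE v : markov_spectrum v <-> (1%:E <= v)%E.
Proof.
split; first exact: markov_spectrum_ge1.
case: v => [k||] //; last by move=> _; exact: markov_spectrum_infty.
rewrite lee_fin => k_ge1; have -> : k = `|k|%N%:Z by lia.
by apply: markov_spectrum_natr; lia.
Qed.

Lemma is_M_rangeE v :
  (exists g : int -> {poly rat}, (forall i, (1 < size (g i))%N) /\ is_M g v) <->
  (1%:E <= v)%E.
Proof.
split => [[g [hg hM]] | ]; first exact: is_M_ge1 hg hM.
case: v => [k||] //; last first.
  exists (fun i => 'X^(`|i|%N.+1)).
  by split => [i|]; [rewrite size_polyXn | exact: is_M_Xn_unbounded].
rewrite lee_fin => k_ge1; exists (fun _ => 'X^`|k|%N).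
split => [i|]; first by rewrite size_polyXn; lia.
have {2}-> : k = `|k|%N%:Z by lia.
by apply: is_M_const_Xn; lia.
Qed.

Theorem theorem10 (v : \bar int) :
  markov_spectrum v <->
  exists g : int -> {poly rat}, (forall i : int, (1 < size (g i))%N) /\ is_M g v.
Proof. by split => [/markov_spectrumE/is_M_rangeE | /is_M_rangeE/markov_spectrumE]. Qed.
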